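(* Let $r\ge2$ be an integer, $f\in C_p(\mathbb{R})$ and $c>0$. Assume that for every $n\in\mathbb{N}_0$, $$H_tf(x)=\min_{k\in\{0,1,\dots,r^n\}}q_f\Big(t,x;\frac{k}{r^n}\Big)\quad\text{for all }(t,x)\in\Big[\frac{1}{2cr^n},\infty\Big)\times[0,1].$$ Then there exists a dense subset of $[0,1]$ such that $f$ is not differentiable at any point of this subset.
   Context: $C_p(\mathbb{R})$ denotes the set of all continuous functions $f:\mathbb{R}\to\mathbb{R}$ periodic with period $1$ with $f(0)=0$; $\mathbb{N}_0=\mathbb{N}\cup\{0\}$. For such $f$, $q_f(t,x;z)=f(z)+\frac{1}{2t}(x-z)^2$ and $H_tf(x)=\inf_{z\in\mathbb{R}}q_f(t,x;z)$ for $t>0$, $x\in\mathbb{R}$. *)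

From Stdlib Require Import Reals List.
From Coquelicot Require Import Coquelicot.
Open Scope R_scope.

Definition Cp (f : R -> R) : Prop :=
  (forall x, continuity_pt f x) /\ (forall x, f (x + 1) = f x) /\ f 0 = 0.

Definition qf (f : R -> R) (t x z : R) : R := f z + (x - z) ^ 2 / (2 * t).

Definition Htf (f : R -> R) (t x : R) : Rbar :=
  Glb_Rbar (fun y => exists z, y = qf f t x z).

Definition qmin (f : R -> R) (r n : nat) (t x : R) : R :=
  fold_right Rmin (qf f t x 0)
    (map (fun k => qf f t x (INR k / INR (r ^ n))) (seq 0 (r ^ n + 1))).

(* If z minimises q_f(t, x; .) then, whenever f is differentiable at z, the
   first-order condition forces f'(z) = (x - z)/t; so a point that minimises
   q_f(t, x; .) for two different x is a point of non-differentiability.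
   Minimisers are nondecreasing in x and, by hypothesis, can be taken on the
   grid {k / r^n}; hence among r^n + 2 increasing points x_i of a small interval
   two consecutive ones share a grid minimiser z. Since
   (x - z)^2 <= 2t (f x - f z) <= 2t osc f, such a z lies close to x_i once
   t = 1/(2 c r^n) is small. *)
From Stdlib Require Import Reals List Lra Lia.
From Coquelicot Require Import Coquelicot.
Open Scope R_scope.

Definition is_minimizer (f : R -> R) (t x z : R) : Prop :=
  forall w, qf f t x z <= qf f t x w.

Lemma Htf_le_qf (f : R -> R) (t x v w : R) :
  Htf f t x = Finite v -> v <= qf f t x w.
Proof.
  intros E.
  destruct (Glb_Rbar_correct (fun y => exists z, y = qf f t x z)) as [Hlb _].
  unfold Htf in E; rewrite E in Hlb.
  exact (Hlb _ (ex_intro _ w eq_refl)).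
Qed.

Lemma fold_right_Rmin_map (g : nat -> R) (a : R) (l : list nat) :
  fold_right Rmin a (map g l) = a \/
  exists k, In k l /\ fold_right Rmin a (map g l) = g k.
Proof.
  induction l as [|k l IH]; simpl; [now left|].
  destruct (Rle_dec (g k) (fold_right Rmin a (map g l))) as [Hle|Hgt].
  - rewrite Rmin_left by exact Hle. right; exists k; auto.
  - rewrite Rmin_right by lra.
    destruct IH as [IH|[k' [Hk' IH]]]; [now left|].
    right; exists k'; auto.
Qed.

Lemma qmin_attained (f : R -> R) (r n : nat) (t x : R) :
  exists k, (k <= r ^ n)%nat /\ qmin f r n t x = qf f t x (INR k / INR (r ^ n)).
Proof.
  unfold qmin.
  destruct (fold_right_Rmin_map (fun k => qf f t x (INR k / INR (r ^ n)))
              (qf f t x 0) (seq 0 (r ^ n + 1))) as [E|[k [Hk E]]].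
  - exists 0%nat; split; [lia|]. rewrite E; simpl; unfold Rdiv; now rewrite Rmult_0_l.
  - exists k; split; [apply in_seq in Hk; lia|exact E].
Qed.

Lemma grid_minimizer_of_Htf (f : R -> R) (r n : nat) (t x : R) :
  Htf f t x = Finite (qmin f r n t x) ->
  exists k, (k <= r ^ n)%nat /\ is_minimizer f t x (INR k / INR (r ^ n)).
Proof.
  intros E.
  destruct (qmin_attained f r n t x) as [k [Hk Ek]].
  exists k; split; [exact Hk|].
  intros w; rewrite <- Ek; exact (Htf_le_qf f t x _ w E).
Qed.

Section Minimizers.

Variables (f : R -> R) (t : R).
Hypothesis t_pos : 0 < t.

(* Adding the two minimality inequalities cancels the f-terms and leaves
   (x2 - x1)(z1 - z2) <= 0. *)
Lemma minimizer_monotone (x1 x2 z1 z2 : R) :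
  x1 < x2 -> is_minimizer f t x1 z1 -> is_minimizer f t x2 z2 -> z1 <= z2.
Proof.
  intros Hx H1 H2.
  specialize (H1 z2); specialize (H2 z1); unfold qf, Rdiv in *.
  set (u := / (2 * t)) in *.
  assert (Hu : 0 < u) by (apply Rinv_0_lt_compat; lra).
  destruct (Rle_dec z1 z2) as [|Hgt]; [assumption|].
  assert (0 < u * (x2 - x1) * (z1 - z2)) by (apply Rmult_lt_0_compat; nra).
  nra.
Qed.

Lemma minimizer_sq_dist (x z : R) :
  is_minimizer f t x z -> (x - z) ^ 2 <= 2 * t * (f x - f z).
Proof.
  intros Hmin; specialize (Hmin x); unfold qf in Hmin.
  replace ((x - x) ^ 2 / (2 * t)) with 0 in Hmin by (field; lra).
  assert (Hq : (x - z) ^ 2 / (2 * t) <= f x - f z) by lra.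
  apply (Rmult_le_compat_r (2 * t)) in Hq; [|lra].
  replace ((x - z) ^ 2 / (2 * t) * (2 * t)) with ((x - z) ^ 2) in Hq by (field; lra).
  lra.
Qed.

Lemma minimizer_is_derive (x z l : R) :
  is_minimizer f t x z -> is_derive f z l -> l = (x - z) / t.
Proof.
  intros Hmin Hf.
  assert (Hq : is_derive (qf f t x) z (l - (x - z) / t)).
  { unfold qf.
    evar (dq : R).
    assert (Hp : is_derive (fun y => (x - y) ^ 2 / (2 * t)) z dq)
      by (unfold dq; auto_derive; [exact I|reflexivity]).
    replace (l - (x - z) / t) with (l + dq) by (unfold dq; field; lra).
    exact (is_derive_plus _ _ _ _ _ Hf Hp). }
  apply is_derive_Reals in Hq.
  pose proof (deriv_minimum (qf f t x) (z - 1) (z + 1) z (exist _ _ Hq)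
                ltac:(lra) ltac:(lra) (fun w _ _ => Hmin w)) as H0.
  simpl in H0; lra.
Qed.

Lemma shared_minimizer_not_ex_derive (x1 x2 z : R) :
  x1 <> x2 -> is_minimizer f t x1 z -> is_minimizer f t x2 z -> ~ ex_derive f z.
Proof.
  intros Hx H1 H2 [l Hl].
  pose proof (minimizer_is_derive x1 z l H1 Hl).
  pose proof (minimizer_is_derive x2 z l H2 Hl).
  apply Hx, (Rmult_eq_reg_r (/ t)); [|apply Rinv_neq_0_compat; lra].
  unfold Rdiv in *; lra.
Qed.

End Minimizers.

(* Pigeonhole: without a collision the chosen k strictly increase, so k >= i at
   every index i <= N + 1, which is impossible for k <= N. *)
Lemma monotone_rel_collision (P : nat -> nat -> Prop) (N : nat) :
  (forall i, (i <= S N)%nat -> exists k, (k <= N)%nat /\ P i k) ->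
  (forall i k k', (i <= N)%nat -> P i k -> P (S i) k' -> (k <= k')%nat) ->
  exists i k, (i <= N)%nat /\ (k <= N)%nat /\ P i k /\ P (S i) k.
Proof.
  intros Htot Hmono.
  assert (Hstep : forall i, (i <= S N)%nat ->
            (exists i k, (i <= N)%nat /\ (k <= N)%nat /\ P i k /\ P (S i) k) \/
            exists k, (i <= k <= N)%nat /\ P i k).
  { induction i as [|i IH]; intros Hi.
    - destruct (Htot 0%nat Hi) as [k [Hk Pk]]. right; exists k; split; [lia|exact Pk].
    - destruct (IH ltac:(lia)) as [Hcol|[k [Hk Pk]]]; [now left|].
      destruct (Htot (S i) Hi) as [k' [Hk' Pk']].
      destruct (Nat.eq_dec k k') as [<-|Hne].
      + left; exists i, k; repeat split; auto; lia.
      + right; exists k'; split; [|exact Pk'].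
        pose proof (Hmono i k k' ltac:(lia) Pk Pk'); lia. }
  destruct (Hstep (S N) (Nat.le_refl _)) as [Hcol|[k [Hk _]]]; [exact Hcol|lia].
Qed.

Lemma grid_shared_minimizer (f : R -> R) (t a b : R) (N : nat) :
  0 < t -> a < b -> (0 < N)%nat ->
  (forall x, a <= x <= b ->
     exists k, (k <= N)%nat /\ is_minimizer f t x (INR k / INR N)) ->
  exists k x1 x2, (k <= N)%nat /\ a <= x1 < x2 /\ x2 <= b /\
    is_minimizer f t x1 (INR k / INR N) /\ is_minimizer f t x2 (INR k / INR N).
Proof.
  intros Ht Hab HN Hgrid.
  set (s := (b - a) / INR (S N)).
  assert (HSN : 0 < INR (S N)) by (apply lt_0_INR; lia).
  assert (Hs : 0 < s) by (apply Rdiv_lt_0_compat; lra).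
  set (xs i := a + INR i * s).
  assert (Hxs : forall i, (i <= S N)%nat -> a <= xs i <= b).
  { intros i Hi; apply le_INR in Hi; pose proof (pos_INR i).
    assert (INR i * s <= b - a).
    { replace (b - a) with (INR (S N) * s) by (unfold s; field; lra).
      apply Rmult_le_compat_r; lra. }
    unfold xs; split; nra. }
  assert (Hinc : forall i, xs i < xs (S i)) by (intros i; unfold xs; rewrite S_INR; lra).
  destruct (monotone_rel_collision
              (fun i k => is_minimizer f t (xs i) (INR k / INR N)) N)
    as [i [k [Hi [Hk [H1 H2]]]]].
  - intros i Hi; exact (Hgrid _ (Hxs i Hi)).
  - intros i k k' _ Hk Hk'.
    pose proof (minimizer_monotone f t Ht _ _ _ _ (Hinc i) Hk Hk') as Hle.
    assert (HN' : 0 < / INR N) by (apply Rinv_0_lt_compat, lt_0_INR; exact HN).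
    apply INR_le, (Rmult_le_reg_r (/ INR N)); [exact HN'|exact Hle].
  - exists k, (xs i), (xs (S i)).
    pose proof (Hxs i ltac:(lia)); pose proof (Hxs (S i) ltac:(lia)); pose proof (Hinc i).
    repeat split; auto; lra.
Qed.

Lemma minimizer_near (f : R -> R) (eps : R) :
  (forall x, continuity_pt f x) -> 0 < eps ->
  exists T, 0 < T /\ forall t x z, 0 < t <= T -> 0 <= x <= 1 -> 0 <= z <= 1 ->
    is_minimizer f t x z -> Rabs (z - x) < eps.
Proof.
  intros Hcont Heps.
  destruct (continuity_ab_maj f 0 1 ltac:(lra) (fun y _ => Hcont y)) as [xM [HM HxM]].
  destruct (continuity_ab_min f 0 1 ltac:(lra) (fun y _ => Hcont y)) as [xm [Hm Hxm]].
  assert (Hosc : 0 <= f xM - f xm) by (pose proof (HM xm Hxm); lra).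
  exists (eps ^ 2 / (2 * (f xM - f xm + 1))).
  split; [apply Rdiv_lt_0_compat; nra|].
  intros t x z Ht Hx Hz Hmin.
  pose proof (minimizer_sq_dist f t ltac:(lra) x z Hmin) as Hsq.
  pose proof (HM x Hx); pose proof (Hm z Hz).
  assert (2 * t * (f x - f z) < eps ^ 2).
  { destruct Ht as [Ht HtT].
    apply Rlt_le_trans with (2 * t * (f xM - f xm + 1)); [nra|].
    apply (Rmult_le_compat_r (2 * (f xM - f xm + 1))) in HtT; [|lra].
    replace (eps ^ 2 / (2 * (f xM - f xm + 1)) * (2 * (f xM - f xm + 1)))
      with (eps ^ 2) in HtT by (field; lra).
    nra. }
  apply Rabs_def1; nra.
Qed.

Lemma grid_step_small (r : nat) (c T : R) :
  (2 <= r)%nat -> 0 < c -> 0 < T ->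
  exists n, 0 < 1 / (2 * c * INR (r ^ n)) <= T.
Proof.
  intros Hr Hc HT.
  destruct (archimed_cor1 (2 * c * T)) as [n [Hn Hn0]]; [nra|].
  exists n.
  assert (Hlt : INR n < INR (r ^ n)) by (apply lt_INR, Nat.pow_gt_lin_r; lia).
  assert (Hn0' : 0 < INR n) by (apply lt_0_INR; exact Hn0).
  assert (Hinv : / INR (r ^ n) < / INR n) by (apply Rinv_lt_contravar; nra).
  replace (1 / (2 * c * INR (r ^ n))) with (/ (2 * c) * / INR (r ^ n)) by (field; lra).
  assert (Hc' : 0 < / (2 * c)) by (apply Rinv_0_lt_compat; lra).
  split; [apply Rmult_lt_0_compat; [exact Hc'|apply Rinv_0_lt_compat; lra]|].
  apply (Rmult_le_reg_l (2 * c)); [lra|].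
  rewrite <- Rmult_assoc, Rinv_r, Rmult_1_l by lra.
  lra.
Qed.

Lemma grid_point_bounds (k N : nat) :
  (0 < N)%nat -> (k <= N)%nat -> 0 <= INR k / INR N <= 1.
Proof.
  intros HN Hk.
  apply lt_0_INR in HN; apply le_INR in Hk; pose proof (pos_INR k).
  split; [apply Rdiv_le_0_compat; lra|].
  apply (Rmult_le_reg_r (INR N)); [exact HN|].
  unfold Rdiv; rewrite Rmult_assoc, Rinv_l; lra.
Qed.

Lemma unit_interval_nbhd (x0 e : R) :
  0 <= x0 <= 1 -> 0 < e ->
  exists a b, a < b /\ forall x, a <= x <= b -> 0 <= x <= 1 /\ Rabs (x - x0) <= e.
Proof.
  intros Hx0 He.
  exists (Rmax 0 (x0 - e)), (Rmin 1 (x0 + e)); split.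
  - unfold Rmax, Rmin; repeat destruct Rle_dec; lra.
  - intros x Hx.
    pose proof (Rmax_l 0 (x0 - e)); pose proof (Rmax_r 0 (x0 - e)).
    pose proof (Rmin_l 1 (x0 + e)); pose proof (Rmin_r 1 (x0 + e)).
    split; [|apply Rabs_le]; lra.
Qed.

Theorem theorem4p3 (r : nat) (f : R -> R) (c : R) :
  (2 <= r)%nat -> Cp f -> 0 < c ->
  (forall (n : nat) (t x : R),
      1 / (2 * c * INR (r ^ n)) <= t -> 0 <= x <= 1 ->
      Htf f t x = Finite (qmin f r n t x)) ->
  exists D : R -> Prop,
    (forall x, D x -> 0 <= x <= 1) /\
    (forall x, 0 <= x <= 1 -> forall eps, 0 < eps -> exists d, D d /\ Rabs (d - x) < eps) /\
    (forall x, D x -> ~ ex_derive f x).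
Proof.
  intros Hr [Hcont _] Hc Hgrid.
  exists (fun d => 0 <= d <= 1 /\ ~ ex_derive f d).
  split; [tauto|]; split; [|tauto].
  intros x0 Hx0 eps Heps.
  destruct (minimizer_near f (eps / 2) Hcont ltac:(lra)) as [T [HT Hnear]].
  destruct (grid_step_small r c T Hr Hc HT) as [n [Ht HtT]].
  set (t := 1 / (2 * c * INR (r ^ n))) in *.
  assert (HN : (0 < r ^ n)%nat) by (apply Nat.neq_0_lt_0, Nat.pow_nonzero; lia).
  destruct (unit_interval_nbhd x0 (eps / 2) Hx0 ltac:(lra)) as [a [b [Hab Hsub]]].
  destruct (grid_shared_minimizer f t a b (r ^ n) Ht Hab HN
              (fun x Hx => grid_minimizer_of_Htf f r n t x
                             (Hgrid n t x (Rle_refl t) (proj1 (Hsub x Hx)))))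
    as [k [x1 [x2 [Hk [Hx1 [Hx2 [H1 H2]]]]]]].
  pose proof (grid_point_bounds k (r ^ n) HN Hk) as Hz.
  exists (INR k / INR (r ^ n)); split.
  - split; [exact Hz|].
    exact (shared_minimizer_not_ex_derive f t Ht x1 x2 _ ltac:(lra) H1 H2).
  - destruct (Hsub x1 ltac:(lra)) as [Hx1' Hx1x0].
    pose proof (Hnear t x1 _ (conj Ht HtT) Hx1' Hz H1).
    replace (INR k / INR (r ^ n) - x0) with ((INR k / INR (r ^ n) - x1) + (x1 - x0)) by ring.
    pose proof (Rabs_triang (INR k / INR (r ^ n) - x1) (x1 - x0)); lra.
Qed.
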